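(* Let $T>0$ and let $f:\Omega\times[0,T]\times\mathbb{R}\times\mathbb{R}^d\to\mathbb{R}$ satisfy $f(\cdot,y,z)\in L^2_{\mathcal{F}}(0,T)$ for each $(y,z)$ and $|f(t,y,z)-f(t,y',z')|\le\mu(|y-y'|+|z-z'|)$. For $(t,y,z)\in[0,T]\times\mathbb{R}\times\mathbb{R}^d$ let $(Y^{t,y,z}_s)_{s\in[t,T]}$ solve $Y^{t,y,z}_s=y-\int_t^sf(r,Y^{t,y,z}_r,z)dr+z(B_s-B_t)$. Suppose that for each $(t,y,z)\in[0,T]\times\mathbb{R}\times\mathbb{R}^d$, $$f(\omega,r,Y^{t,y,z}_r,z)\ge0\ (\text{resp. }=0)\quad dr\times dP\text{-a.s. on }[t,T]\times\Omega.$$ Then for each $(y,z)\in\mathbb{R}\times\mathbb{R}^d$, $f(\omega,t,y,z)\ge0$ (resp. $=0$) $dt\times dP$-a.s. on $[0,T]\times\Omega$.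
   Context: $(\Omega,\mathcal{F},P)$ carries a $d$-dimensional Brownian motion $B$ with filtration $\mathcal{F}_t=\sigma\{B_s:s\le t\}$; $L^2_{\mathcal{F}}(0,T)$ denotes real predictable processes $\phi$ with $E\int_0^T|\phi_s|^2ds<\infty$. *)

From HB Require Import structures.
From mathcomp Require Import all_boot all_order all_algebra.
From mathcomp Require Import all_classical all_reals all_analysis.
Set Implicit Arguments. Unset Strict Implicit. Unset Printing Implicit Defensive.
Import Order.TTheory GRing.Theory Num.Theory.
Import numFieldNormedType.Exports.
Local Open Scope classical_set_scope.
Local Open Scope ring_scope.

Section Defs.
Context {R : realType} {dO : measure_display} {Omega : measurableType dO}.

Definition mutually_independent (P : probability Omega R) (I : finType)
    (X : I -> Omega -> R) : Prop :=
  forall A : I -> set R, (forall j, measurable (A j)) ->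
    P (\bigcap_(j in [set: I]) (X j @^-1` A j)) =
    (\prod_(j : I) P (X j @^-1` A j))%E.

Definition brownian_motion (P : probability Omega R) (d : nat)
    (B : 'I_d -> R -> Omega -> R) : Prop :=
  (forall i t, 0 <= t -> measurable_fun [set: Omega] (B i t)) /\
  (forall i w, B i 0 w = 0) /\
  (forall i w, {within `[0, +oo[, continuous (fun t => B i t w)}) /\
  (* independent Gaussian increments: for 0 <= t_0 < t_1 < ... < t_n the
     d*n real increments B_i(t_{k+1}) - B_i(t_k) are mutually independent and
     B_i(t_{k+1}) - B_i(t_k) ~ N(0, t_{k+1} - t_k) *)
  (forall (n : nat) (tt : 'I_n.+1 -> R),
     0 <= tt ord0 ->
     (forall k : 'I_n, tt (widen_ord (leqnSn n) k) < tt (lift ord0 k)) ->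
     mutually_independent P
       (fun ik : 'I_d * 'I_n =>
          fun w => B ik.1 (tt (lift ord0 ik.2)) w
                   - B ik.1 (tt (widen_ord (leqnSn n) ik.2)) w) /\
     (forall (i : 'I_d) (k : 'I_n) (A : set R), measurable A ->
        P ((fun w => B i (tt (lift ord0 k)) w
                     - B i (tt (widen_ord (leqnSn n) k)) w) @^-1` A) =
        normal_prob 0 (Num.sqrt (tt (lift ord0 k) - tt (widen_ord (leqnSn n) k))) A)).

Definition nat_filtration (d : nat) (B : 'I_d -> R -> Omega -> R) (s : R)
    : set (set Omega) :=
  <<s [set E | exists (i : 'I_d) (r : R) (A : set R),
               0 <= r <= s /\ measurable A /\ E = B i r @^-1` A] >>.

Definition predictable_sets (F : R -> set (set Omega)) (T : R)
    : set (set (Omega * R)) :=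
  <<s [set x : Omega * R | 0 <= x.2 <= T],
      [set E | (exists (s u : R) (A : set Omega),
                  0 <= s < u /\ u <= T /\ F s A /\ E = A `*` `]s, u])
             \/ (exists A : set Omega, F 0 A /\ E = A `*` [set 0])] >>.

Definition L2F (P : probability Omega R) (F : R -> set (set Omega)) (T : R)
    (phi : Omega -> R -> R) : Prop :=
  (forall A : set R, measurable A ->
     predictable_sets F T
       ([set x : Omega * R | 0 <= x.2 <= T] `&`
        (fun x => phi x.1 x.2) @^-1` A)) /\
  (\int[P \x lebesgue_measure]_(x in [set x : Omega * R | (0 <= x.2 <= T)%R])
      ((phi x.1 x.2) ^+ 2)%:E < +oo)%E.

End Defs.

Definition eucl_norm {R : realType} (d : nat) (z : 'I_d -> R) : R :=
  Num.sqrt (\sum_(i < d) z i ^+ 2).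

From HB Require Import structures.
From mathcomp Require Import all_boot all_order all_algebra.
From mathcomp Require Import all_classical all_reals all_analysis.
From mathcomp Require Import ring lra.
Set Implicit Arguments. Unset Strict Implicit. Unset Printing Implicit Defensive.
Import Order.TTheory GRing.Theory Num.Theory.
Import numFieldNormedType.Exports.
Local Open Scope classical_set_scope.
Local Open Scope ring_scope.

(* For q < r, the solution Y^q started from y at time q stays
   close to y at time r when r - q is small: its Brownian increment is small
   by path continuity, and its drift over [q, r] is small by a Gronwall-type
   estimate.  By the Lipschitz bound, f(r, y, z) is then a limit of values
   f(r, Y^q_r, z), which lie in the closed set [0, +oo[ (resp. {0}).  Running q
   over a countable dense set of starting times, all hypotheses hold off a
   single null set of paths, and Fubini converts between almost-everywhere
   statements on Omega x [0, T] and on its sections. *)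

Section interval_integrals.
Context {R : realType}.
Notation lam := (@lebesgue_measure R).

Lemma integrable_itv_cst (k q r : R) : lam.-integrable `[q, r] (fun=> k%:E).
Proof.
apply: (@measurable_bounded_integrable _ _ _ lam (cst k)) => //.
  by have := lebesgue_measure_itv `[q, r] => /= ->; case: ifPn; rewrite ltry.
exact: bounded_cst.
Qed.

Lemma le_Rintegral_norm_itv (h : R -> R) (q s r : R) : q <= s -> s <= r ->
  lam.-integrable `[q, r] (EFin \o h) ->
  \int[lam]_(u in `[q, s]) `|h u| <= \int[lam]_(u in `[q, r]) `|h u|.
Proof.
move=> qs sr /integrable_norm hi.
have := @Rintegral_itvB R (fun u => `|h u|) (BLeft q) (BRight r) s hi.
rewrite !bnd_simp => /(_ qs sr) split_int.
by rewrite -subr_ge0 split_int; apply: Rintegral_ge0 => u _.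
Qed.

Lemma Rintegral_norm_tail_lt (h : R -> R) (a c e : R) :
  lam.-integrable `[a, c] (EFin \o h) -> 0 < e ->
  exists2 d, 0 < d &
    forall q, a <= q -> c - q < d -> \int[lam]_(u in `[q, c]) `|h u| < e.
Proof.
move=> hi e_gt0.
have hiT : lam.-integrable setT (EFin \o (h \_ `[a, c])).
  by rewrite -restrict_EFin; apply/integrable_restrict => //=; rewrite setTI.
have [d [d_gt0 small]] := integral_normr_continuous hiT e_gt0.
exists d => // q aq cqd.
have : (lam `[q, c] < d%:E)%E.
  by rewrite lebesgue_measure_itv/= lte_fin; case: ifPn; rewrite lte_fin// -EFinD.
move=> /(small _ (measurable_itv _)); congr (_ < _).
apply: eq_Rintegral => u; rewrite inE/= in_itv/= => /andP[qu uc].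
by rewrite patchE ifT// inE/= in_itv/= uc (le_trans aq qu).
Qed.

Lemma Rintegral_norm_le_addr (h h0 : R -> R) (K q r : R) : q <= r ->
  lam.-integrable `[q, r] (EFin \o h) -> lam.-integrable `[q, r] (EFin \o h0) ->
  (forall u, q <= u <= r -> `|h u| <= `|h0 u| + K) ->
  \int[lam]_(u in `[q, r]) `|h u| <=
    \int[lam]_(u in `[q, r]) `|h0 u| + K * (r - q).
Proof.
move=> qr /integrable_norm hi /integrable_norm h0i hle.
have h0Ki : lam.-integrable `[q, r] (EFin \o (fun u => `|h0 u| + K)).
  by apply: eq_integrable (integrableD _ h0i (integrable_itv_cst K q r)).
have cstE : \int[lam]_(u in `[q, r]) K = K * (r - q).
  rewrite Rintegral_cst//; have := lebesgue_measure_itv `[q, r] => /= ->.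
  rewrite lte_fin; case: ltP => [_|rq] //=.
  suff -> : r = q by rewrite subrr.
  by apply/eqP; rewrite eq_le qr rq.
rewrite -cstE -RintegralD//; last exact: integrable_itv_cst.
by apply: le_Rintegral => // u; rewrite /= in_itv/=; exact: hle.
Qed.

End interval_integrals.

Section arithmetic.
Context {R : realFieldType}.

Lemma self_bound_le (I J k c : R) : 0 <= I -> k * 2 <= 1 ->
  I <= J + k * (I + c) -> I <= 2 * (J + k * c).
Proof. by move=> I_ge0 k_le Ile; nra. Qed.

Lemma exists_small_step (mu c e d : R) : 0 <= mu -> 0 <= c -> 0 < e -> 0 < d ->
  exists2 rho, 0 < rho & forall t, 0 <= t < rho ->
    [/\ t < d, mu * t * 2 <= 1 & mu * t * c * 6 <= e].
Proof.
move=> mu_ge0 c_ge0 e_gt0 d_gt0.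
have mu1_gt0 : 0 < 2 * (mu + 1) by rewrite mulr_gt0// ltr_wpDl.
have muc1_gt0 : 0 < 6 * (mu * c + 1) by rewrite mulr_gt0// ltr_wpDl ?mulr_ge0.
exists (Num.min d (Num.min (1 / (2 * (mu + 1))) (e / (6 * (mu * c + 1))))).
  by rewrite !lt_min d_gt0 !divr_gt0.
move=> t /andP[t_ge0]; rewrite !lt_min => /and3P[td].
rewrite !ltr_pdivlMr// => t1 t2; split => //; nra.
Qed.

End arithmetic.

Section flow_near_start.
Context {R : realType}.
Notation lam := (@lebesgue_measure R).
Variables (T mu y r : R) (g Y : R -> R -> R) (b : R -> R) (Q : set R).
Hypothesis mu_ge0 : 0 <= mu.
Hypothesis g_lip : forall u v v', 0 <= u <= T ->
  `|g u v - g u v'| <= mu * `|v - v'|.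
Hypothesis Q_dense : forall a c, a < c -> exists2 q, Q q & a < q < c.
Hypothesis Y_eq : forall q, Q q -> 0 <= q <= T -> forall s, q <= s <= T ->
  lam.-integrable `[q, s] (fun u => (g u (Y q u))%:E) /\
  Y q s = y - \int[lam]_(u in `[q, s]) g u (Y q u) + (b s - b q).
Hypothesis b_cont : {for r, continuous b}.
Hypothesis r_gt0 : 0 < r.
Hypothesis r_leT : r <= T.

Let increments_le a e :=
  forall s s', a < s -> s <= s' <= r -> `|b s' - b s| <= e.

Let drift_var q := \int[lam]_(u in `[q, r]) `|g u (Y q u)|.

Lemma increment_small e : 0 < e -> exists2 a, 0 <= a < r & increments_le a e.
Proof.
move=> e_gt0.
have /cvgrPdist_lt /(_ (e / 2)) := b_cont.
rewrite divr_gt0// => /(_ isT) /nbhs_ballP [dl /= dl_gt0 near_r].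
have close u : r - dl < u <= r -> `|b r - b u| < e / 2.
  move=> /andP[ru ur]; apply: near_r.
  by rewrite /ball /= ger0_norm ?subr_ge0// ltrBlDr -ltrBlDl.
exists (Num.max 0 (r - dl)); first by rewrite le_max lexx gt_max r_gt0 gtrBl.
move=> s s'; rewrite gt_max => /andP[_ rs] /andP[ss' s'r].
have -> : b s' - b s = (b r - b s) - (b r - b s') by ring.
apply: le_trans (ler_normB _ _) _; rewrite [e]splitr.
by apply: lerD; apply/ltW/close; rewrite ?(le_trans ss') ?(lt_le_trans rs).
Qed.

Lemma norm_g_le u v v' : 0 <= u <= T ->
  `|g u v| <= `|g u v'| + mu * (`|v - y| + `|v' - y|).
Proof.
move=> uT; have -> : g u v = g u v' + (g u v - g u v') by ring.
apply: le_trans (ler_normD _ _) _; rewrite lerD2l.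
apply: le_trans (g_lip v v' uT) _; apply: ler_wpM2l => //.
have -> : v - v' = (v - y) - (v' - y) by ring.
exact: ler_normB.
Qed.

Lemma dist_Y_start q e : Q q -> 0 <= q <= r ->
  (forall s, q <= s <= r -> `|b s - b q| <= e) ->
  forall s, q <= s <= r ->
  `|Y q s - y| <= drift_var q + e.
Proof.
move=> Qq /andP[q_ge0 qr] b_small s /andP[qs sr].
have qT : 0 <= q <= T by rewrite q_ge0 (le_trans qr).
have sT : q <= s <= T by rewrite qs (le_trans sr).
have rT : q <= r <= T by rewrite qr.
have [int_s ->] := Y_eq Qq qT sT.
have [int_r _] := Y_eq Qq qT rT.
rewrite addrAC [y - _ - y]addrAC subrr add0r; apply: le_trans (ler_normD _ _) _.
rewrite normrN lerD ?b_small ?qs//.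
apply: le_trans (le_normr_Rintegral _ _) _ => //.
exact: le_Rintegral_norm_itv.
Qed.

(* Comparing with a fixed starting time q0 bounds the drift of Y q without
   integrating u |-> g u y, whose integrability is not available. *)
Lemma drift_var_self_bound a e q0 q : 0 <= a -> increments_le a e ->
  Q q0 -> Q q -> a < q0 -> q0 < q -> q < r ->
  drift_var q <= \int[lam]_(u in `[q, r]) `|g u (Y q0 u)| +
    mu * (r - q) * (drift_var q + (e + (drift_var q0 + e))).
Proof.
move=> a_ge0 b_small Qq0 Qq aq0 q0q qr.
have q0_ge0 : 0 <= q0 := le_trans a_ge0 (ltW aq0).
have q_ge0 : 0 <= q := le_trans q0_ge0 (ltW q0q).
have q0r : q0 <= r := ltW (lt_trans q0q qr).
have q0rT : q0 <= r <= T by rewrite q0r.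
have qrT : q <= r <= T by rewrite ltW.
have q0T : 0 <= q0 <= T by rewrite q0_ge0 (le_trans q0r).
have qT : 0 <= q <= T by rewrite q_ge0 (le_trans (ltW qr)).
have [int0 _] := Y_eq Qq0 q0T q0rT.
have [intq _] := Y_eq Qq qT qrT.
rewrite mulrAC; apply: Rintegral_norm_le_addr (ltW qr) intq _ _.
  by apply: integrableS int0 => //; apply: subset_itvr; rewrite bnd_simp ltW.
move=> u /andP[qu ur]; apply: le_trans (norm_g_le (Y q u) (Y q0 u) _) _.
  by rewrite (le_trans q_ge0 qu) (le_trans ur).
rewrite lerD2l ler_wpM2l// addrA lerD//.
  apply: (dist_Y_start Qq _ (fun s => b_small _ _ (lt_trans aq0 q0q))).
    by rewrite q_ge0 ltW.
  by rewrite qu.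
apply: (dist_Y_start Qq0 _ (fun s => b_small _ _ aq0)); first by rewrite q0_ge0.
by rewrite (le_trans (ltW q0q)).
Qed.

Lemma flow_near_start e : 0 < e ->
  exists q, [/\ Q q, 0 <= q < r & `|Y q r - y| <= e].
Proof.
move=> e_gt0; have e3_gt0 : 0 < e / 3 by rewrite divr_gt0.
have e6_gt0 : 0 < e / 6 by rewrite divr_gt0.
have [a /andP[a_ge0 ar] b_small] := increment_small e3_gt0.
have [q0 Qq0 /andP[aq0 q0r]] := Q_dense ar.
have q0_ge0 : 0 <= q0 := le_trans a_ge0 (ltW aq0).
have q0T : 0 <= q0 <= T by rewrite q0_ge0 (le_trans (ltW q0r)).
have q0rT : q0 <= r <= T by rewrite ltW.
have [int0 _] := Y_eq Qq0 q0T q0rT.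
pose c := e / 3 + (drift_var q0 + e / 3).
have c_ge0 : 0 <= c by rewrite !addr_ge0 ?(ltW e3_gt0)// Rintegral_ge0.
have [d d_gt0 tail] := Rintegral_norm_tail_lt int0 e6_gt0.
have [rho rho_gt0 step] := exists_small_step mu_ge0 c_ge0 e_gt0 d_gt0.
have maxr : Num.max q0 (r - rho) < r by rewrite gt_max q0r gtrBl.
have [q Qq /andP[+ qr]] := Q_dense maxr; rewrite gt_max => /andP[q0q rq].
have q_ge0 : 0 <= q := le_trans q0_ge0 (ltW q0q).
exists q; split; rewrite ?q_ge0//.
have rq_small : 0 <= r - q < rho by rewrite subr_ge0 ltW//= ltrBlDl -ltrBlDr.
have [rq_d step_mu step_c] := step _ rq_small.
have J_lt := tail q (ltW q0q) rq_d.
have drift_ge0 : 0 <= drift_var q by apply: Rintegral_ge0 => u _.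
have := self_bound_le drift_ge0 step_mu
  (drift_var_self_bound a_ge0 b_small Qq0 Qq aq0 q0q qr).
have := @dist_Y_start q (e / 3) Qq _ (fun s => b_small _ _ (lt_trans aq0 q0q)).
rewrite q_ge0 ltW// => /(_ isT r); rewrite ltW// lexx => /(_ isT).
rewrite -/c; lra.
Qed.

Lemma closed_mem_flow_start (S : set R) : closed S ->
  (forall q, Q q -> 0 <= q < r -> S (g r (Y q r))) -> S (g r y).
Proof.
move=> /closure_id S_closed S_flow; rewrite S_closed.
move=> B /nbhs_ballP [e /= e_gt0 ball_B].
have mu1_gt0 : 0 < 2 * (mu + 1) by rewrite mulr_gt0// ltr_wpDl.
have [q [Qq q_range Yq_near]] := flow_near_start (divr_gt0 e_gt0 mu1_gt0).
exists (g r (Y q r)); split; first exact: S_flow.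
apply: ball_B; rewrite /ball /=.
have rT : 0 <= r <= T by rewrite ltW.
apply: le_lt_trans (g_lip _ _ rT) _; rewrite distrC.
move: Yq_near; rewrite ler_pdivlMr//.
have := normr_ge0 (Y q r - y); nra.
Qed.

End flow_near_start.

Section product_sections.
Context {d1 d2 : measure_display} {T1 : measurableType d1}
  {T2 : measurableType d2} {R : realType}.
Variables (m1 : {measure set T1 -> \bar R})
  (m2 : {sigma_finite_measure set T2 -> \bar R}).

Lemma ae_xsection_of_ae_prod (A : T1 * T2 -> Prop) :
  {ae (m1 \x m2)%E, forall x, A x} ->
  {ae m1, forall w, {ae m2, forall v, A (w, v)}}.
Proof.
move=> [N [mN N0 notA_N]].
have mNw := measurable_fun_xsection m2 mN.
have : (\int[m1]_w `|(m2 \o xsection N) w|)%E = 0%E.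
  rewrite -N0; apply: eq_integral => w _.
  by rewrite gee0_abs// measure_ge0.
move/(ae_eq_integral_abs _ measurableT mNw); apply: filterS => w /(_ I) Nw0.
exists (xsection N w); split => //; first exact: measurable_xsection.
by move=> v notA; rewrite /xsection/= inE; exact: notA_N.
Qed.

Lemma ae_prod_of_ae_xsection (A : T1 * T2 -> Prop) :
  measurable [set x | ~ A x] ->
  {ae m1, forall w, {ae m2, forall v, A (w, v)}} ->
  {ae (m1 \x m2)%E, forall x, A x}.
Proof.
move=> mE aeA; exists [set x | ~ A x]; split => //.
have mEw := measurable_fun_xsection m2 mE.
rewrite /product_measure1 (ae_eq_integral (cst 0%E)) ?integral0//.
apply: filterS aeA => w [N [mN N0 notA_N]] _ /=.
by apply/eqP; rewrite -measure_le0 -N0 le_measure ?inE//;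
  [exact: measurable_xsection | move=> v; rewrite /xsection/= inE; exact: notA_N].
Qed.

End product_sections.

Section predictable_measurable.
Context {R : realType} {dO : measure_display} {Omega : measurableType dO}.

Lemma nat_filtration_measurable (d : nat) (B : 'I_d -> R -> Omega -> R) (s : R) :
  (forall i t, 0 <= t -> measurable_fun [set: Omega] (B i t)) -> 0 <= s ->
  nat_filtration B s `<=` measurable.
Proof.
move=> mB s_ge0; apply: smallest_sub.
  split; [exact: measurable0 | by move=> A mA; exact: measurableD |
          by move=> A mA; exact: bigcupT_measurable].
move=> _ [i [r [A [/andP[r_ge0 _] [mA ->]]]]].
by rewrite -[_ @^-1` _]setTI; apply: mB.
Qed.

Lemma predictable_sets_measurable (F : R -> set (set Omega)) (T : R) :
  (forall s, 0 <= s -> F s `<=` measurable) ->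
  predictable_sets F T `<=` (measurable : set (set (Omega * R))).
Proof.
move=> mF; have mD : measurable [set x : Omega * R | 0 <= x.2 <= T].
  rewrite (_ : [set x | _] = setT `*` `[0, T]); last first.
    by apply/seteqP; split => x /=; rewrite in_itv/=; [move=> -> | case].
  exact: measurableX.
apply: smallest_sub.
  split; [exact: measurable0 | by move=> A mA; exact: measurableD |
          by move=> A mA; exact: bigcupT_measurable].
move=> _ [[s [u [A [/andP[s_ge0 _] [_ [FA ->]]]]]] | [A [FA ->]]].
  exact: measurableX (mF s s_ge0 A FA) (measurable_itv _).
exact: measurableX (mF 0 (lexx 0) A FA) (measurable_set1 _).
Qed.

End predictable_measurable.

Lemma continuous_at_of_within_Ici {R : realType} (p : R -> R) (r : R) : 0 < r ->
  {within `[0, +oo[, continuous p} -> {for r, continuous p}.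
Proof.
move=> r_gt0 p_cont.
have p_cont' : {within `[0, r + 1], continuous p}.
  by apply: continuous_subspaceW p_cont => x /=; rewrite !in_itv/= => /andP[->].
apply: within_continuous_continuous p_cont' _; first by rewrite ltr_wpDl ?ltW.
by rewrite in_itv/= r_gt0 ltrDl ltr01.
Qed.

Definition rat_enum {R : realType} (n : nat) : R :=
  if @unpickle rat n is Some q then ratr q else 0.

Lemma rat_enum_dense {R : realType} (a c : R) : a < c ->
  exists2 q, range rat_enum q & a < q < c.
Proof.
move=> ac; have [q] := rat_in_itvoo ac; rewrite in_itv/= => qac.
by exists (ratr q) => //; exists (pickle q) => //; rewrite /rat_enum pickleK.
Qed.

Lemma eucl_norm_subrr {R : realType} (d : nat) (z : 'I_d -> R) :
  eucl_norm (fun i => z i - z i) = 0.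
Proof. by rewrite /eucl_norm big1 ?sqrtr0// => i _; rewrite subrr expr0n. Qed.

Lemma ae_implyr {d} {T : measurableType d} {R : realType}
    (mu : {measure set T -> \bar R}) (C : Prop) (A : T -> Prop) :
  (C -> {ae mu, forall x, A x}) -> {ae mu, forall x, C -> A x}.
Proof.
have [c /(_ c)|nc _] := pselect C; first by apply: filterS => x Ax _.
by apply: aeW => x /nc.
Qed.

Section flow_invariance.
Context {R : realType} {dO : measure_display} {Omega : measurableType dO}.
Notation lam := (@lebesgue_measure R).
Variables (P : probability Omega R) (d : nat) (B : 'I_d -> R -> Omega -> R).
Variables (T mu : R) (f : Omega -> R -> R -> ('I_d -> R) -> R).
Variables (Y : R -> R -> ('I_d -> R) -> R -> Omega -> R) (y : R) (z : 'I_d -> R).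
Hypothesis B_meas : forall i t, 0 <= t -> measurable_fun [set: Omega] (B i t).
Hypothesis B_cont : forall i w, {within `[0, +oo[, continuous (fun t => B i t w)}.
Hypothesis f_L2 : L2F P (nat_filtration B) T (fun w t => f w t y z).
Hypothesis f_lip : forall w t v v', 0 <= t <= T ->
  `|f w t v z - f w t v' z| <= mu * `|v - v'|.
Hypothesis Y_eq : forall t, 0 <= t <= T ->
  {ae P, forall w, forall s, t <= s <= T ->
     lam.-integrable `[t, s] (fun r => (f w r (Y t y z r w) z)%:E) /\
     Y t y z s w = y - \int[lam]_(r in `[t, s]) f w r (Y t y z r w) z
                     + \sum_(i < d) z i * (B i s w - B i t w)}.

Lemma measurable_not_mem_f (S : set R) : measurable S ->
  measurable [set x : Omega * R | ~ (0 <= x.2 <= T -> S (f x.1 x.2 y z))].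
Proof.
move=> mS; rewrite (_ : [set x | _] = [set x | 0 <= x.2 <= T] `&`
  (fun x => f x.1 x.2 y z) @^-1` ~` S); last first.
  by apply/seteqP; split => x /=; [move/not_implyP | move=> [Dx nS] /(_ Dx)].
apply: predictable_sets_measurable (f_L2.1 _ (measurableC mS)) => s s_ge0.
exact: nat_filtration_measurable.
Qed.

Lemma sum_paths_continuous w r : 0 < r ->
  {for r, continuous (fun s => \sum_(i < d) z i * B i s w)}.
Proof.
move=> r_gt0; apply: cvg_big => [|i _]; first exact: add_continuous.
by apply: cvgM; [exact: cvg_cst | exact: continuous_at_of_within_Ici].
Qed.

Lemma ae_mem_of_ae_mem_flow (S : set R) : closed S ->
  (forall t, 0 <= t <= T ->
     {ae (P \x lam)%E, forall x : Omega * R,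
        t <= x.2 <= T -> S (f x.1 x.2 (Y t y z x.2 x.1) z)}) ->
  {ae (P \x lam)%E, forall x : Omega * R, 0 <= x.2 <= T -> S (f x.1 x.2 y z)}.
Proof.
move=> S_closed flow_S.
have mE := measurable_not_mem_f (measurable_realfun.closed_measurable S_closed).
apply: (ae_prod_of_ae_xsection (m2 := lam) mE).
have := ae_foralln (fun n => ae_implyr (@Y_eq (rat_enum n))).
have := ae_xsection_of_ae_prod
  (ae_foralln (fun n => ae_implyr (@flow_S (rat_enum n)))).
(* at r = 0 there is no starting time q < r to compare with *)
have r_neq0 : {ae lam, forall r : R, r <> 0}.
  exists [set 0]; split => //; first exact: lebesgue_measure_set1.
  by move=> r /contrapT.
apply: filterS2 => w S_flow Y_eqw.
apply: filterS2 S_flow r_neq0 => r S_flowr r_neq0 /andP[r_ge0 rT].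
have r_gt0 : 0 < r by rewrite lt_neqAle eq_sym r_ge0 andbT; apply/eqP.
have r_range : 0 <= r <= T by rewrite r_ge0.
have mu_ge0 : 0 <= mu.
  have := f_lip w y (y + 1) r_range.
  by rewrite opprD addrA subrr add0r normrN normr1 mulr1; apply: le_trans.
apply: (closed_mem_flow_start (y := y) (g := fun u v => f w u v z)
  (Y := fun q s => Y q y z s w) (Q := range rat_enum) mu_ge0 _ _ _
  (sum_paths_continuous (w := w) r_gt0) r_gt0 rT S_closed).
- by move=> u v v' uT; exact: f_lip.
- by move=> a c; exact: rat_enum_dense.
- move=> _ [n _ <-] qT s qsT; have [int_s ->] := Y_eqw n qT s qsT.
  split=> //; rewrite -sumrB; congr (_ + _).
  by apply: eq_bigr => i _; rewrite mulrBr.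
- move=> _ [n _ <-] /andP[q_ge0 qr]; apply: S_flowr => /=.
    by rewrite q_ge0 (le_trans (ltW qr)).
  by rewrite ltW.
Qed.

End flow_invariance.

Theorem lemma5p3 (R : realType) (dO : measure_display)
  (Omega : measurableType dO) (P : probability Omega R) (d : nat)
  (B : 'I_d -> R -> Omega -> R) (T mu : R)
  (f : Omega -> R -> R -> ('I_d -> R) -> R)
  (Y : R -> R -> ('I_d -> R) -> R -> Omega -> R) :
  brownian_motion P B ->
  0 < T ->
  (forall (y : R) (z : 'I_d -> R),
     L2F P (nat_filtration B) T (fun w t => f w t y z)) ->
  (forall (w : Omega) (t y y' : R) (z z' : 'I_d -> R), 0 <= t <= T ->
     `|f w t y z - f w t y' z'| <=
       mu * (`|y - y'| + eucl_norm (fun i => z i - z' i))) ->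
  (forall (t y : R) (z : 'I_d -> R), 0 <= t <= T ->
     {ae P, forall w, forall s : R, t <= s <= T ->
        lebesgue_measure.-integrable `[t, s]
          (fun r => (f w r (Y t y z r w) z)%:E) /\
        Y t y z s w = y - Rintegral lebesgue_measure `[t, s]
                            (fun r => f w r (Y t y z r w) z)
                        + \sum_(i < d) z i * (B i s w - B i t w)}) ->
  ((forall (t y : R) (z : 'I_d -> R), 0 <= t <= T ->
      {ae (P \x lebesgue_measure)%E, forall x : Omega * R,
         t <= x.2 <= T -> 0 <= f x.1 x.2 (Y t y z x.2 x.1) z}) ->
   forall (y : R) (z : 'I_d -> R),
      {ae (P \x lebesgue_measure)%E, forall x : Omega * R,
         0 <= x.2 <= T -> 0 <= f x.1 x.2 y z})
  /\
  ((forall (t y : R) (z : 'I_d -> R), 0 <= t <= T ->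
      {ae (P \x lebesgue_measure)%E, forall x : Omega * R,
         t <= x.2 <= T -> f x.1 x.2 (Y t y z x.2 x.1) z = 0}) ->
   forall (y : R) (z : 'I_d -> R),
      {ae (P \x lebesgue_measure)%E, forall x : Omega * R,
         0 <= x.2 <= T -> f x.1 x.2 y z = 0}).
Proof.
move=> [B_meas [_ [B_cont _]]] _ f_L2 f_lip Y_eq.
have f_lip_z z w t v v' : 0 <= t <= T ->
    `|f w t v z - f w t v' z| <= mu * `|v - v'|.
  by move=> tT; have := f_lip w t v v' z z tT; rewrite eucl_norm_subrr addr0.
have invariance y z (S : set R) := ae_mem_of_ae_mem_flow B_meas B_cont
  (f_L2 y z) (f_lip_z z) (fun t tT => Y_eq t y z tT) (S := S).
split=> [f_flow_ge0 | f_flow_eq0] y z.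
- apply: (invariance y z [set v | 0 <= v] _ (fun t tT => f_flow_ge0 t y z tT)).
  by rewrite -closure_gt; exact: closed_closure.
- apply: (invariance y z [set 0] _ (fun t tT => f_flow_eq0 t y z tT)).
  exact/accessible_closed_set1/hausdorff_accessible/norm_hausdorff.
Qed.
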